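(* Let $I_1,I_3>0$ and $\gamma,\delta\in\mathbb{R}$. Consider the time-dependent Hamiltonian (harmonic Lagrange top with time-dependent potential) on the phase space with coordinates Euler angles $(\phi,\theta,\psi)$, $\theta\in(0,\pi)$, and conjugate momenta $(p_\phi,p_\theta,p_\psi)$: \[ H=\frac{1}{2I_1}\Big(p_\theta^2+\frac{p_\phi^2+p_\psi^2-2p_\phi p_\psi\cos\theta}{\sin^2\theta}\Big)+\frac12\Big(\frac1{I_3}-\frac1{I_1}\Big)p_\psi^2+U(\cos\theta,t), \] \[ U(z,t)=-\frac{1}{I_1}\Big(\tfrac12\gamma e^{t/I_1}z+\tfrac14\delta e^{2t/I_1}z^2\Big). \] Along any solution of Hamilton's equations, $p_\phi$ and $p_\psi$ are constant, and the function $y(\tau):=\theta(I_1\tau)$ (i.e.\ $\tau=t/I_1$) satisfies exactly the trigonometric form of $P_V$, \[ \frac{d^2y}{d\tau^2}=-\frac{\partial V}{\partial y},\qquad V(y,\tau)=-\frac{\kappa_\infty^2}{2\sin^2(y/2)}-\frac{\kappa_0^2}{2\cos^2(y/2)}-\frac{\gamma e^{\tau}}{2}\cos y-\frac{\delta e^{2\tau}}{4}\cos^2 y, \] with parameters $\kappa_0^2=-\tfrac14(p_\phi+p_\psi)^2$ and $\kappa_\infty^2=-\tfrac14(p_\phi-p_\psi)^2$. Conversely, the equation of motion of $\theta$ for this Hamiltonian (with fixed values of $p_\phi,p_\psi$) is equivalent to this trigonometric $P_V$ equation.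
   Context: Hamilton's equations are $\dot q=\partial H/\partial p$, $\dot p=-\partial H/\partial q$ for each conjugate pair $(q,p)\in\{(\phi,p_\phi),(\theta,p_\theta),(\psi,p_\psi)\}$, with $\dot{}=d/dt$. Through $w=-\cot^2(y/2)$, $\zeta=e^\tau$, the trigonometric form of $P_V$ is equivalent to the fifth Painlevé equation with $\alpha=\kappa_\infty^2/2$, $\beta=-\kappa_0^2/2$. *)

From Stdlib Require Import Reals.
From Coquelicot Require Import Coquelicot.
Open Scope R_scope.

Definition U (I1 gamma delta z t : R) : R :=
  - (/ I1) * (/ 2 * gamma * exp (t / I1) * z + / 4 * delta * exp (2 * t / I1) * z ^ 2).

Definition Ham (I1 I3 gamma delta : R)
  (phi theta psi pphi ptheta ppsi t : R) : R :=
  / (2 * I1) * (ptheta ^ 2 +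
     (pphi ^ 2 + ppsi ^ 2 - 2 * pphi * ppsi * cos theta) / (sin theta) ^ 2)
  + / 2 * (/ I3 - / I1) * ppsi ^ 2 + U I1 gamma delta (cos theta) t.

Definition VPV (k0sq kinfsq gamma delta y tau : R) : R :=
  - kinfsq / (2 * (sin (y / 2)) ^ 2) - k0sq / (2 * (cos (y / 2)) ^ 2)
  - gamma * exp tau / 2 * cos y - delta * exp (2 * tau) / 4 * (cos y) ^ 2.

Definition in_open_int (a b : Rbar) (t : R) : Prop := Rbar_lt a t /\ Rbar_lt t b.

(* Partial derivatives of H are taken with Derive in the
   corresponding argument, all other arguments frozen at their current values. *)
Definition HamiltonSol (I1 I3 gamma delta : R) (a b : Rbar)
  (phi theta psi pphi ptheta ppsi : R -> R) : Prop :=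
  forall t, in_open_int a b t ->
    0 < theta t < PI /\
    let H := Ham I1 I3 gamma delta in
    is_derive phi t
      (Derive (fun x => H (phi t) (theta t) (psi t) x (ptheta t) (ppsi t) t) (pphi t)) /\
    is_derive theta t
      (Derive (fun x => H (phi t) (theta t) (psi t) (pphi t) x (ppsi t) t) (ptheta t)) /\
    is_derive psi t
      (Derive (fun x => H (phi t) (theta t) (psi t) (pphi t) (ptheta t) x t) (ppsi t)) /\
    is_derive pphi t
      (- Derive (fun x => H x (theta t) (psi t) (pphi t) (ptheta t) (ppsi t) t) (phi t)) /\
    is_derive ptheta t
      (- Derive (fun x => H (phi t) x (psi t) (pphi t) (ptheta t) (ppsi t) t) (theta t)) /\
    is_derive ppsi t
      (- Derive (fun x => H (phi t) (theta t) x (pphi t) (ptheta t) (ppsi t) t) (psi t)).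

(* The equations of motion of the (theta, p_theta) pair alone, with p_phi, p_psi
   frozen at constant values cphi, cpsi (phi, psi arbitrary: H does not depend on them). *)
Definition ThetaEqMotion (I1 I3 gamma delta : R) (a b : Rbar) (cphi cpsi : R)
  (phi psi theta ptheta : R -> R) : Prop :=
  forall t, in_open_int a b t ->
    let H := Ham I1 I3 gamma delta in
    is_derive theta t
      (Derive (fun x => H (phi t) (theta t) (psi t) cphi x cpsi t) (ptheta t)) /\
    is_derive ptheta t
      (- Derive (fun x => H (phi t) x (psi t) cphi (ptheta t) cpsi t) (theta t)).

Definition TrigPV (k0sq kinfsq gamma delta I1 : R) (a b : Rbar) (y : R -> R) : Prop :=
  forall tau, in_open_int a b (I1 * tau) ->
    ex_derive y tau /\
    is_derive_n y 2 tau
      (- Derive (fun u => VPV k0sq kinfsq gamma delta u tau) (y tau)).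

From Stdlib Require Import Reals Lra Classical_Prop.
From Coquelicot Require Import Coquelicot.
Open Scope R_scope.

(* Proof outline.
   1. Real-analysis preliminaries: the open interval (a,b) is an open convex set,
      so a function with zero derivative on it is constant (mean value theorem);
      and the chain rule for a linear change of variable  tau |-> c * tau.
   2. Properties of the Hamiltonian: phi and psi are cyclic, dH/dp_theta = p_theta/I1,
      and the energy identity  I1 * H(theta, t = I1 tau) = V(theta, tau) + const,
      obtained from the half-angle formulas sin^2 theta = 4 sin^2(theta/2) cos^2(theta/2),
      cos theta = 1 - 2 sin^2(theta/2).  Differentiating it in theta gives
      I1 * dH/dtheta = dV/dy.
   3. With p_phi, p_psi frozen, the theta equations of motion
      theta' = p_theta / I1,  p_theta' = - dH/dtheta  hold iff y(tau) = theta(I1 tau)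
      satisfies y'' = - dV/dy (the momentum being p_theta = I1 theta' = y'). *)

Lemma in_open_int_locally (a b : Rbar) (t : R) :
  in_open_int a b t -> locally t (in_open_int a b).
Proof.
  intros [Ha Hb]. apply filter_and.
  - exact (open_Rbar_gt' t a Ha).
  - exact (open_Rbar_lt' t b Hb).
Qed.

Lemma in_open_int_convex (a b : Rbar) (x y z : R) :
  in_open_int a b x -> in_open_int a b z -> x <= y <= z -> in_open_int a b y.
Proof.
  intros [Hax _] [_ Hzb] [Hxy Hyz]. split.
  - apply (Rbar_lt_le_trans a x y); [exact Hax | exact Hxy].
  - apply (Rbar_le_lt_trans y z b); [exact Hyz | exact Hzb].
Qed.

Lemma derive_zero_constant (a b : Rbar) (f : R -> R) :
  (forall t, in_open_int a b t -> is_derive f t 0) ->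
  exists c, forall t, in_open_int a b t -> f t = c.
Proof.
  intros Hd. destruct (classic (exists t0, in_open_int a b t0)) as [[t0 Ht0] | Hempty].
  - exists (f t0). intros t Ht.
    assert (Hseg : forall x, Rmin t0 t <= x <= Rmax t0 t -> in_open_int a b x).
    { intros x Hx. unfold Rmin, Rmax in Hx. destruct (Rle_dec t0 t).
      + apply (in_open_int_convex a b t0 x t); [exact Ht0 | exact Ht | lra].
      + apply (in_open_int_convex a b t x t0); [exact Ht | exact Ht0 | lra]. }
    destruct (MVT_gen f t0 t (fun _ => 0)) as [c [_ Hc]].
    + intros x Hx. apply Hd, Hseg. lra.
    + intros x Hx. apply continuity_pt_filterlim.
      apply (@ex_derive_continuous R_AbsRing R_NormedModule).
      exists 0. apply Hd, Hseg, Hx.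
    + lra.
  - exists 0. intros t Ht. exfalso. apply Hempty. exists t. exact Ht.
Qed.

Lemma is_derive_scale (f : R -> R) (c u l : R) :
  is_derive f (c * u) l -> is_derive (fun v => f (c * v)) u (c * l).
Proof.
  intros Hf.
  assert (Hlin : is_derive (fun v : R => c * v) u c) by (auto_derive; auto; ring).
  exact (is_derive_comp f (fun v => c * v) u l c Hf Hlin).
Qed.

Lemma in_open_int_scale_locally (a b : Rbar) (c tau : R) :
  in_open_int a b (c * tau) -> locally tau (fun u => in_open_int a b (c * u)).
Proof.
  intros Hin.
  assert (Hcont : continuous (fun u : R => c * u) tau).
  { apply continuity_pt_filterlim, continuity_pt_mult.
    - apply continuity_pt_const. intros x y. reflexivity.
    - apply continuity_pt_id. }
  apply Hcont, in_open_int_locally, Hin.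
Qed.

Lemma Ham_cyclic_phi (I1 I3 g d theta psi pphi ptheta ppsi t phi : R) :
  Derive (fun x => Ham I1 I3 g d x theta psi pphi ptheta ppsi t) phi = 0.
Proof. unfold Ham. apply Derive_const. Qed.

Lemma Ham_cyclic_psi (I1 I3 g d phi theta pphi ptheta ppsi t psi : R) :
  Derive (fun x => Ham I1 I3 g d phi theta x pphi ptheta ppsi t) psi = 0.
Proof. unfold Ham. apply Derive_const. Qed.

Lemma Ham_dptheta (I1 I3 g d phi theta psi pphi ppsi t ptheta : R) : I1 <> 0 ->
  Derive (fun x => Ham I1 I3 g d phi theta psi pphi x ppsi t) ptheta = ptheta / I1.
Proof.
  intros HI. apply is_derive_unique. unfold Ham. auto_derive; [exact I |].
  field. exact HI.
Qed.

Lemma Ham_energy_VPV (I1 I3 g d phi theta psi pphi ptheta ppsi tau : R) :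
  0 < I1 -> 0 < theta < PI ->
  I1 * Ham I1 I3 g d phi theta psi pphi ptheta ppsi (I1 * tau) =
  VPV (- / 4 * (pphi + ppsi) ^ 2) (- / 4 * (pphi - ppsi) ^ 2) g d theta tau
  + (ptheta ^ 2 / 2 + I1 * (/ 2 * (/ I3 - / I1) * ppsi ^ 2)).
Proof.
  intros HI [H0 Hpi].
  set (h := theta / 2).
  assert (Htheta : theta = 2 * h) by (unfold h; field).
  assert (Hsin : 0 < sin h) by (apply sin_gt_0; unfold h; lra).
  assert (Hcos : 0 < cos h) by (apply cos_gt_0; unfold h; lra).
  assert (Hpyth : cos h ^ 2 = 1 - sin h ^ 2)
    by (rewrite <- Rsqr_pow2, cos2, Rsqr_pow2; ring).
  assert (Hsin2 : sin theta ^ 2 = 4 * sin h ^ 2 * cos h ^ 2)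
    by (rewrite Htheta, sin_2a; ring).
  assert (Hcos1 : cos theta = 1 - 2 * sin h ^ 2)
    by (rewrite Htheta, cos_2a_sin; ring).
  assert (Htau1 : I1 * tau / I1 = tau) by (field; lra).
  assert (Htau2 : 2 * (I1 * tau) / I1 = 2 * tau) by (field; lra).
  assert (Hcos2 : 0 < 1 - sin h ^ 2) by (rewrite <- Hpyth; nra).
  unfold Ham, VPV, U. fold h.
  rewrite Htau1, Htau2, Hsin2, Hcos1, Hpyth.
  set (c := / 2 * (/ I3 - / I1) * ppsi ^ 2).
  field. repeat split; try lra; nra.
Qed.

Lemma VPV_derivable (k0sq kinfsq g d y tau : R) :
  0 < y < PI -> ex_derive (fun u => VPV k0sq kinfsq g d u tau) y.
Proof.
  intros [H0 Hpi].
  assert (Hsin : 0 < sin (y / 2)) by (apply sin_gt_0; lra).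
  assert (Hcos : 0 < cos (y / 2)) by (apply cos_gt_0; lra).
  unfold VPV. auto_derive. repeat split; nra.
Qed.

Lemma Ham_dtheta_VPV (I1 I3 g d phi psi pphi ptheta ppsi t tau theta : R) :
  0 < I1 -> 0 < theta < PI -> t = I1 * tau ->
  I1 * Derive (fun x => Ham I1 I3 g d phi x psi pphi ptheta ppsi t) theta =
  Derive (fun u => VPV (- / 4 * (pphi + ppsi) ^ 2) (- / 4 * (pphi - ppsi) ^ 2) g d u tau)
    theta.
Proof.
  intros HI Htheta ->.
  set (V := fun u => VPV (- / 4 * (pphi + ppsi) ^ 2) (- / 4 * (pphi - ppsi) ^ 2) g d u tau).
  set (K := ptheta ^ 2 / 2 + I1 * (/ 2 * (/ I3 - / I1) * ppsi ^ 2)).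
  assert (Hnear : locally theta (fun x => 0 < x < PI))
    by exact (open_and _ _ (open_gt 0) (open_lt PI) theta Htheta).
  rewrite (Derive_ext_loc _ (fun x => / I1 * (V x + K))).
  2:{ apply (filter_imp (fun x => 0 < x < PI)); [| exact Hnear].
      intros x Hx. unfold V, K.
      rewrite <- (Ham_energy_VPV I1 I3 g d phi x psi pphi ptheta ppsi tau HI Hx).
      field. lra. }
  rewrite Derive_scal, Derive_plus, Derive_const.
  - field. lra.
  - apply VPV_derivable, Htheta.
  - apply ex_derive_const.
Qed.

Notation TrigPV_mom I1 g d a b cphi cpsi :=
  (TrigPV (- / 4 * (cphi + cpsi) ^ 2) (- / 4 * (cphi - cpsi) ^ 2) g d I1 a b).

(* Direct half of step 3: the theta equations of motion imply P_V for the rescaled angle,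
   the momentum p_theta(I1 tau) being the derivative of y. *)
Lemma theta_motion_PV (I1 I3 g d : R) (a b : Rbar) (cphi cpsi : R)
    (phi psi theta ptheta : R -> R) :
  0 < I1 -> (forall t, in_open_int a b t -> 0 < theta t < PI) ->
  ThetaEqMotion I1 I3 g d a b cphi cpsi phi psi theta ptheta ->
  TrigPV_mom I1 g d a b cphi cpsi (fun tau => theta (I1 * tau)).
Proof.
  intros HI Hrange Hmot.
  assert (Hy' : forall u, in_open_int a b (I1 * u) ->
            is_derive (fun v => theta (I1 * v)) u (ptheta (I1 * u))).
  { intros u Hu. destruct (Hmot _ Hu) as [Hth _].
    rewrite Ham_dptheta in Hth by lra.
    replace (ptheta (I1 * u)) with (I1 * (ptheta (I1 * u) / I1)) by (field; lra).
    apply is_derive_scale, Hth. }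
  intros tau Htau. split.
  - eexists. apply Hy', Htau.
  - cbn [is_derive_n Derive_n]. apply (is_derive_ext_loc (fun u => ptheta (I1 * u))).
    { apply (filter_imp (fun u => in_open_int a b (I1 * u)));
        [| exact (in_open_int_scale_locally a b I1 tau Htau)].
      intros u Hu. symmetry. apply is_derive_unique, Hy', Hu. }
    destruct (Hmot _ Htau) as [_ Hpth].
    set (x0 := I1 * tau) in *.
    rewrite <- (Ham_dtheta_VPV I1 I3 g d (phi x0) (psi x0) cphi (ptheta x0) cpsi x0 tau)
      by (auto; apply Hrange, Htau).
    rewrite Ropp_mult_distr_r. apply is_derive_scale, Hpth.
Qed.

Lemma PV_theta_motion (I1 I3 g d : R) (a b : Rbar) (cphi cpsi : R)
    (phi psi theta : R -> R) :
  0 < I1 -> (forall t, in_open_int a b t -> 0 < theta t < PI) ->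
  TrigPV_mom I1 g d a b cphi cpsi (fun tau => theta (I1 * tau)) ->
  ThetaEqMotion I1 I3 g d a b cphi cpsi phi psi theta (fun t => I1 * Derive theta t).
Proof.
  intros HI Hrange HPV.
  set (y := fun tau => theta (I1 * tau)).
  assert (Hunscale : forall t, y (/ I1 * t) = theta t)
    by (intros t; unfold y; f_equal; field; lra).
  assert (Hin : forall t, in_open_int a b t -> in_open_int a b (I1 * (/ I1 * t))).
  { intros t Ht. replace (I1 * (/ I1 * t)) with t by (field; lra). exact Ht. }
  assert (Htheta' : forall t, in_open_int a b t ->
            is_derive theta t (/ I1 * Derive y (/ I1 * t))).
  { intros t Ht. destruct (HPV _ (Hin _ Ht)) as [Hy _].
    apply (is_derive_ext (fun v => y (/ I1 * v))); [exact Hunscale |].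
    apply is_derive_scale, Derive_correct, Hy. }
  assert (Hmom : forall t, in_open_int a b t -> I1 * Derive theta t = Derive y (/ I1 * t)).
  { intros t Ht. rewrite (is_derive_unique _ _ _ (Htheta' _ Ht)). field. lra. }
  intros t Ht. simpl. split.
  - rewrite Ham_dptheta by lra.
    replace (I1 * Derive theta t / I1) with (Derive theta t) by (field; lra).
    rewrite (is_derive_unique _ _ _ (Htheta' _ Ht)). apply Htheta', Ht.
  - apply (is_derive_ext_loc (fun s => Derive y (/ I1 * s))).
    { apply (filter_imp (in_open_int a b)); [| exact (in_open_int_locally a b t Ht)].
      intros s Hs. symmetry. apply Hmom, Hs. }
    destruct (HPV _ (Hin _ Ht)) as [_ Hy''].
    cbn [is_derive_n Derive_n] in Hy''.
    replace (I1 * (/ I1 * t)) with t in Hy'' by (field; lra).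
    replace (- Derive (fun x => Ham I1 I3 g d (phi t) x (psi t) cphi (I1 * Derive theta t) cpsi t)
                 (theta t))
      with (/ I1 * - (I1 * Derive (fun x => Ham I1 I3 g d (phi t) x (psi t) cphi
                                     (I1 * Derive theta t) cpsi t) (theta t)))
      by (field; lra).
    rewrite (Ham_dtheta_VPV I1 I3 g d (phi t) (psi t) cphi (I1 * Derive theta t) cpsi t (/ I1 * t))
      by (auto; field; lra).
    apply is_derive_scale, Hy''.
Qed.

Theorem theorem1 (I1 I3 gamma delta : R) (hI1 : 0 < I1) (hI3 : 0 < I3) (a b : Rbar) :
  (forall phi theta psi pphi ptheta ppsi : R -> R,
     HamiltonSol I1 I3 gamma delta a b phi theta psi pphi ptheta ppsi ->
     exists cphi cpsi : R,
       (forall t, in_open_int a b t -> pphi t = cphi /\ ppsi t = cpsi) /\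
       TrigPV (- / 4 * (cphi + cpsi) ^ 2) (- / 4 * (cphi - cpsi) ^ 2)
              gamma delta I1 a b (fun tau => theta (I1 * tau))) /\
  (forall (cphi cpsi : R) (phi psi theta : R -> R),
     (forall t, in_open_int a b t -> 0 < theta t < PI) ->
     ((exists ptheta : R -> R,
         ThetaEqMotion I1 I3 gamma delta a b cphi cpsi phi psi theta ptheta) <->
      TrigPV (- / 4 * (cphi + cpsi) ^ 2) (- / 4 * (cphi - cpsi) ^ 2)
             gamma delta I1 a b (fun tau => theta (I1 * tau)))).
Proof.
  split.
  - intros phi theta psi pphi ptheta ppsi Hsol.
    destruct (derive_zero_constant a b pphi) as [cphi Hcphi].
    { intros t Ht. destruct (Hsol t Ht) as (_ & _ & _ & _ & Hpphi & _).
      rewrite Ham_cyclic_phi, Ropp_0 in Hpphi. exact Hpphi. }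
    destruct (derive_zero_constant a b ppsi) as [cpsi Hcpsi].
    { intros t Ht. destruct (Hsol t Ht) as (_ & _ & _ & _ & _ & _ & Hppsi).
      rewrite Ham_cyclic_psi, Ropp_0 in Hppsi. exact Hppsi. }
    exists cphi, cpsi. split; [intros t Ht; auto |].
    apply (theta_motion_PV I1 I3 gamma delta a b cphi cpsi phi psi theta ptheta hI1).
    + intros t Ht. apply (Hsol t Ht).
    + intros t Ht. destruct (Hsol t Ht) as (_ & _ & Htheta & _ & _ & Hptheta & _).
      rewrite (Hcphi t Ht), (Hcpsi t Ht) in Htheta, Hptheta. split; assumption.
  - intros cphi cpsi phi psi theta Hrange. split.
    + intros [ptheta Hmot]. exact (theta_motion_PV I1 I3 gamma delta a b cphi cpsi
                                     phi psi theta ptheta hI1 Hrange Hmot).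
    + intros HPV. exists (fun t => I1 * Derive theta t).
      exact (PV_theta_motion I1 I3 gamma delta a b cphi cpsi phi psi theta hI1 Hrange HPV).
Qed.
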